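(* Let $\mathcal{H}$ be a finite family of rooted digraphs. Let $D$ be a digraph, $k$ an integer, $W$ an $\mathcal{H}$-deletion set of $D$ with $|W|\le k+1$, and $\mathcal{S}=(S_1,\dots,S_q)$ an ordered partition of $W$. Let $Q$ be a set with $S_1\subseteq Q\subseteq V(D)\setminus(W\setminus S_1)$ such that $D[Q]$ contains no subgraph isomorphic to a graph of $\mathcal{H}$ and $N^+(Q)$ is a minimum $S_1$-$(W\setminus S_1)$ separator. Let $X$ be a solution of $(D,\mathcal{S},W,k)$ such that $R_D(S_1,X)\cap N^+(Q)=\emptyset$. Then there is a solution $X'$ for $(D,\mathcal{S},W,k)$ that contains $N^+(Q)$.
   Context: Subgraphs are not necessarily induced; strong components are maximal sets of mutually reachable vertices. A digraph is rooted if some vertex reaches all its vertices. $X$ is an $\mathcal{H}$-deletion set of $D$ if no strong component of $D-X$ contains a subgraph isomorphic to a graph in $\mathcal{H}$. A solution for $(D,\mathcal{S},W,k)$ is a set $X\subseteq V(D)$ with $|X|\le k$, $X\cap W=\emptyset$, $X$ an $\mathcal{H}$-deletion set, and $X$ intersecting every directed $S_i$-$S_j$ path in $D$ for all $i<j$. $N^+(Q)$ is the set of vertices outside $Q$ with an in-neighbour in $Q$. For disjoint $A,B$, an $A$-$B$ separator is a set $C$ disjoint from $A\cup B$ such that $D-C$ has no directed path from $A$ to $B$; it is minimum if of smallest size. $R_D(A,Y)$ is the set of vertices reachable from $A$ in $D-Y$. *)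

From Stdlib Require List.
From mathcomp Require Import all_boot.
Set Implicit Arguments. Unset Strict Implicit. Unset Printing Implicit Defensive.

Record digraph := Digraph { dvert : finType; darc : rel dvert }.
Arguments darc : clear implicits.

Definition rooted (H : digraph) : Prop :=
  exists r : dvert H, forall v : dvert H, connect (darc H) r v.

Section Defs.
Variables (V : finType) (E : rel V).

Definition arc_avoid (Y : {set V}) : rel V :=
  [rel x y | E x y && (x \notin Y) && (y \notin Y)].

Definition reach (Y : {set V}) (a v : V) : bool :=
  (a \notin Y) && connect (arc_avoid Y) a v.

Definition R_D (A Y : {set V}) : {set V} :=
  [set v | [exists a in A, reach Y a v]].

Definition same_strong (Y : {set V}) (x y : V) : bool :=
  reach Y x y && reach Y y x.

(* f witnesses that H is isomorphic to a (not necessarily induced) subgraph of D *)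
Definition sub_embedding (H : digraph) (f : dvert H -> V) : Prop :=
  injective f /\ forall u v, darc H u v -> E (f u) (f v).

Definition contains_in (Q : {set V}) (H : digraph) : Prop :=
  exists f : dvert H -> V, sub_embedding f /\ forall u, f u \in Q.

(* X is an H-deletion set: no strong component of D - X contains a subgraph
   isomorphic to a member of the family *)
Definition deletion_set (Hs : seq digraph) (X : {set V}) : Prop :=
  forall H, List.In H Hs -> forall f : dvert H -> V, sub_embedding f ->
    ~ ((forall u, f u \notin X) /\ (forall u v, same_strong X (f u) (f v))).

Definition out_nbhd (Q : {set V}) : {set V} :=
  [set v | (v \notin Q) && [exists u in Q, E u v]].

Definition separator (A B C : {set V}) : Prop :=
  [disjoint C & A :|: B] /\ forall a b, a \in A -> b \in B -> ~~ reach C a b.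

Definition min_separator (A B C : {set V}) : Prop :=
  separator A B C /\ forall C', separator A B C' -> #|C| <= #|C'|.

Definition hits_all_paths (A B X : {set V}) : Prop :=
  forall a b (p : seq V), a \in A -> b \in B -> path E a p -> last a p = b ->
    exists2 x, x \in a :: p & x \in X.

Definition ordered_partition (W : {set V}) (S : seq {set V}) : Prop :=
  [/\ 0 < size S,
      forall i, i < size S -> nth set0 S i != set0,
      forall i j, i < j < size S -> [disjoint nth set0 S i & nth set0 S j] &
      forall v, (v \in W) = [exists i : 'I_(size S), v \in nth set0 S i]].

Definition solution (Hs : seq digraph) (S : seq {set V}) (W : {set V}) (k : nat)
    (X : {set V}) : Prop :=
  [/\ #|X| <= k, [disjoint X & W], deletion_set Hs X &
      forall i j, i < j < size S -> hits_all_paths (nth set0 S i) (nth set0 S j) X].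

End Defs.

From Stdlib Require List.
From mathcomp Require Import all_boot.
From mathcomp Require Import zify.
Set Implicit Arguments. Unset Strict Implicit. Unset Printing Implicit Defensive.

(* Let C = N^+(Q) and let Q' = R_D(S_1, C) be the part of Q reachable from
   S_1 in D - C; Q' is closed under arcs of D - C and contains no member of H.
   The exchange X' = (X \ Q') u C is again a solution: a strong component of
   D - X' meeting Q' lies inside Q', and one avoiding Q' is already strongly
   connected in D - X; a path hit by X inside Q' must still leave Q' through
   C before reaching S_j, j > 1.  As for the size, X separates S_1 from
   W \ S_1, so N = N^+(R_D(S_1, X)) is a separator contained in X; since
   R_D(S_1, X) avoids C it lies in Q', whence N \ C lies in X n Q', and the
   minimality of C gives |C \ X| <= |C \ N| <= |N \ C| <= |X n Q'|. *)

Lemma connect_sub_between (T : finType) (e e' : rel T) a y :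
  (forall u v, connect e a u -> e u v -> connect e v y -> e' u v) ->
  connect e a y -> connect e' a y.
Proof.
move=> sub_e /connectP[p pp yp].
suff: forall x, connect e a x -> connect e' a x -> path e x p ->
  y = last x p -> connect e' a y by apply; rewrite ?connect0.
elim: p {pp yp} => [|z p IH] x /= ax ax'; first by move=> _ ->.
case/andP=> exz pz yp; have zy : connect e z y by apply/connectP; exists p.
apply: IH pz yp; first exact: connect_trans ax (connect1 exz).
exact: connect_trans ax' (connect1 (sub_e _ _ ax exz zy)).
Qed.

Lemma card_exchange (T : finType) (X C N P : {set T}) :
  N \subset X -> N :\: C \subset P -> [disjoint C & P] -> #|C| <= #|N| ->
  #|(X :\: P) :|: C| <= #|X|.
Proof.
move=> NX NCP CP CN.
have CX_sub : (X :\: P) :|: C \subset (X :\: P) :|: (C :\: N).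
  apply/subsetP => v; rewrite !inE => /orP[-> // | vC].
  have vP : v \notin P by rewrite (disjointFr CP vC).
  by case vN: (v \in N); rewrite ?vC ?orbT // vP (subsetP NX v vN).
have NC_XP : N :\: C \subset X :&: P.
  by rewrite subsetI NCP andbT; apply: subset_trans NX; apply: subsetDl.
have := subset_leq_card CX_sub; have := subset_leq_card NC_XP.
have := cardsU (X :\: P) (C :\: N); have := cardsID P X.
have := cardsID C N; have := cardsID N C; rewrite setIC; lia.
Qed.

Section Reachability.
Variables (V : finType) (E : rel V).

Definition out_closed (Y P : {set V}) : Prop :=
  forall u v, u \in P -> E u v -> v \notin Y -> v \in P.

Lemma connect_avoid_closed (Y P : {set V}) u v :
  out_closed Y P -> u \in P -> connect (arc_avoid E Y) u v -> v \in P.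
Proof.
move=> clP + /connectP[p pp ->] {v}; elim: p u pp => //= w p IH u.
by case/andP=> /andP[/andP[euw _] wY] pw uP; apply: IH (clP _ _ uP euw wY).
Qed.

Lemma path_avoid_notin (Y : {set V}) x p :
  x \notin Y -> path (arc_avoid E Y) x p -> {in x :: p, forall y, y \notin Y}.
Proof.
elim: p x => [|z p IH] x xY /=; first by move=> _ y; rewrite inE => /eqP->.
case/andP=> /andP[_ zY] pz y; rewrite inE => /orP[/eqP-> //|]; exact: IH.
Qed.

Lemma path_exit_closed (Y P : {set V}) x p :
  out_closed Y P -> path E x p -> x \in P -> last x p \notin P ->
  exists2 y, y \in p & y \in Y.
Proof.
move=> clP; elim: p x => [|z p IH] x /=; first by move=> _ ->.
case/andP=> exz pz xP lastP.
case zY: (z \in Y); first by exists z; rewrite ?inE ?eqxx.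
have [y yp yY] := IH z pz (clP _ _ xP exz (negbT zY)) lastP.
by exists y; rewrite // inE yp orbT.
Qed.

Lemma reach_notin (Y : {set V}) a v : reach E Y a v -> v \notin Y.
Proof.
case/andP=> aY /connectP[p pp ->]; apply: (path_avoid_notin aY pp).
exact: mem_last.
Qed.

Lemma reach_step (Y : {set V}) a u v :
  reach E Y a u -> E u v -> v \notin Y -> reach E Y a v.
Proof.
move=> rau euv vY; have uY := reach_notin rau; case/andP: rau => aY au.
by rewrite /reach aY (connect_trans au) // connect1 /arc_avoid /= ?euv ?uY ?vY.
Qed.

Lemma reach_subset_avoid (Y Z : {set V}) a y :
  (forall w, reach E Y a w -> reach E Y w y -> w \notin Z) ->
  reach E Y a y -> reach E Z a y.
Proof.
move=> between ray; have aY : a \notin Y by case/andP: ray.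
have raa : reach E Y a a by rewrite /reach aY connect0.
rewrite /reach (between a raa ray) /=; case/andP: ray => _.
apply: connect_sub_between => u v au /[dup] uv /andP[/andP[euv uY] vY] vy.
have rau : reach E Y a u by rewrite /reach aY.
have ruy : reach E Y u y by rewrite /reach uY (connect_trans (connect1 uv)).
have rvy : reach E Y v y by rewrite /reach vY.
by rewrite /arc_avoid /= euv (between u) // (between v) // (reach_step rau euv vY).
Qed.

Lemma R_D_closed (A Y : {set V}) : out_closed Y (R_D E A Y).
Proof.
move=> u v; rewrite !inE => /existsP[a /andP[aA rau]] euv vY.
by apply/existsP; exists a; rewrite aA (reach_step rau).
Qed.

Lemma R_D_disjoint (A Y : {set V}) : [disjoint R_D E A Y & Y].
Proof.
rewrite disjoint_subset; apply/subsetP => v; rewrite inE => /existsP[a /andP[_]].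
exact: reach_notin.
Qed.

Lemma R_D_min (A Y P : {set V}) :
  A \subset P -> out_closed Y P -> R_D E A Y \subset P.
Proof.
move=> AP clP; apply/subsetP => v; rewrite inE => /existsP[a /andP[aA /andP[_]]].
exact: connect_avoid_closed clP (subsetP AP a aA).
Qed.

Lemma R_D_subset (A Y Z : {set V}) :
  [disjoint R_D E A Y & Z] -> R_D E A Y \subset R_D E A Z.
Proof.
rewrite disjoint_subset => /subsetP RZ; apply/subsetP => v.
rewrite !inE => /existsP[a /andP[aA rav]]; apply/existsP; exists a.
rewrite aA; apply: reach_subset_avoid rav => w raw _.
by apply: (RZ w); rewrite inE; apply/existsP; exists a; rewrite aA.
Qed.

Lemma out_nbhd_closed (P : {set V}) : out_closed (out_nbhd E P) P.
Proof.
move=> u v uP euv; apply: contraR => vP.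
by rewrite inE vP; apply/existsP; exists u; rewrite uP.
Qed.

Lemma out_nbhd_subset (Y P : {set V}) : out_closed Y P -> out_nbhd E P \subset Y.
Proof.
move=> clP; apply/subsetP => v; rewrite inE => /andP[vP /existsP[u /andP[uP euv]]].
by apply: contraR vP; apply: clP euv.
Qed.

Lemma contains_in_subset (P Q : {set V}) (H : digraph) :
  P \subset Q -> contains_in E P H -> contains_in E Q H.
Proof.
by move=> PQ [f [emb fP]]; exists f; split=> // u; apply: subsetP PQ _ (fP u).
Qed.

Lemma hits_all_paths_noreach (A B X : {set V}) a b :
  hits_all_paths E A B X -> a \in A -> b \in B -> ~~ reach E X a b.
Proof.
move=> hit aA bB; apply/negP => /andP[aX /connectP[p pp bp]].
have Ep : path E a p by apply: sub_path pp => u v /andP[/andP[]].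
have [x xp xX] := hit a b p aA bB Ep (esym bp).
by move: (path_avoid_notin aX pp xp); rewrite xX.
Qed.

Lemma out_nbhd_R_D_separator (A B X : {set V}) :
  [disjoint X & A :|: B] -> hits_all_paths E A B X ->
  separator E A B (out_nbhd E (R_D E A X)).
Proof.
move=> XAB hit; have NX := out_nbhd_subset (@R_D_closed A X).
split=> [|a b aA bB]; first exact: disjointWl NX XAB.
apply/negP => /andP[aN ab].
have aX : a \notin X by rewrite (disjointFl XAB) // inE aA.
have aR : a \in R_D E A X.
  by rewrite inE; apply/existsP; exists a; rewrite aA /reach aX connect0.
move: (connect_avoid_closed (@out_nbhd_closed _) aR ab).
rewrite inE => /existsP[a' /andP[a'A ra'b]].
by have := hits_all_paths_noreach hit a'A bB; rewrite ra'b.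
Qed.

Lemma card_exchange_R_D (A B Q X : {set V}) :
  min_separator E A B (out_nbhd E Q) -> [disjoint X & A :|: B] ->
  hits_all_paths E A B X -> R_D E A X :&: out_nbhd E Q = set0 ->
  #|(X :\: R_D E A (out_nbhd E Q)) :|: out_nbhd E Q| <= #|X|.
Proof.
set C := out_nbhd E Q; set R := R_D E A X; set N := out_nbhd E R.
move=> [_ minC] XAB hit RC.
have RP : R \subset R_D E A C by apply: R_D_subset; rewrite -setI_eq0 RC.
have NP : N :\: C \subset R_D E A C.
  apply/subsetP => v /setDP[+ vC]; rewrite inE => /andP[_ /existsP[u /andP[uR euv]]].
  exact: (@R_D_closed A C) _ _ (subsetP RP u uR) euv vC.
apply: card_exchange NP _ (minC _ (out_nbhd_R_D_separator XAB hit)).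
- exact: out_nbhd_subset (@R_D_closed A X).
- by rewrite disjoint_sym R_D_disjoint.
Qed.

Lemma deletion_set_exchange (Hs : seq digraph) (X P C : {set V}) :
  out_closed C P -> (forall H, List.In H Hs -> ~ contains_in E P H) ->
  deletion_set E Hs X -> deletion_set E Hs ((X :\: P) :|: C).
Proof.
set X' := (X :\: P) :|: C => clP noH delX H HH f emb [fX' strong].
have clP' : out_closed X' P.
  by move=> u v uP euv; rewrite /X' !inE negb_or => /andP[_]; apply: clP uP euv.
case: (pickP [pred u | f u \in P]) => [u /= fuP|notP].
  apply: (noH H HH); exists f; split=> // v.
  case/andP: (strong u v) => /andP[_ fuv] _.
  exact: connect_avoid_closed clP' fuP fuv.
have notX w : w \notin X' -> w \notin P -> w \notin X.
  by rewrite !inE negb_or => /andP[+ _] wP; rewrite wP.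
have rX u v : reach E X' (f u) (f v) -> reach E X (f u) (f v).
  apply: reach_subset_avoid => x rux rxv; apply: notX; first exact: reach_notin rux.
  apply: contraFN (notP v) => xP.
  by case/andP: rxv => _ /(connect_avoid_closed clP' xP).
apply: (delX H HH f emb); split=> [u | u v].
  by apply: notX; [apply: fX' | apply: negbT (notP u)].
by case/andP: (strong u v) => /rX ruv /rX rvu; apply/andP.
Qed.

Lemma hits_all_paths_exchange (A B X P C : {set V}) :
  out_closed C P -> [disjoint B & P] ->
  hits_all_paths E A B X -> hits_all_paths E A B ((X :\: P) :|: C).
Proof.
move=> clP BP hit a b p aA bB pp bp.
have [x xp xX] := hit a b p aA bB pp bp.
case xP: (x \in P); last by exists x; rewrite // !inE xP xX.
have bP : b \notin P by rewrite (disjointFr BP bB).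
move: pp bp; case/splitPl: xp => p1 p2 xl; rewrite cat_path last_cat xl.
move=> /andP[_ p2p] bp; rewrite -bp in bP.
have [y yp2 yC] := path_exit_closed clP p2p xP bP.
by exists y; rewrite !inE ?mem_cat ?yp2 ?yC ?orbT.
Qed.

End Reachability.

Section OrderedPartition.
Variables (V : finType) (W : {set V}) (S : seq {set V}).
Hypothesis partS : ordered_partition W S.

Lemma ordered_partition_head_subset : nth set0 S 0 \subset W.
Proof.
case: partS => S_gt0 _ _ memW; apply/subsetP => v vS.
by rewrite memW; apply/existsP; exists (Ordinal S_gt0).
Qed.

Lemma ordered_partition_tail_subset j :
  0 < j < size S -> nth set0 S j \subset W :\: nth set0 S 0.
Proof.
case: partS => _ _ disjS memW jS; apply/subsetP => v vSj; rewrite inE.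
have jS' : j < size S by case/andP: jS.
have vW : v \in W by rewrite memW; apply/existsP; exists (Ordinal jS').
rewrite vW andbT.
by move: (disjS 0 j jS); rewrite disjoint_sym disjoint_subset => /subsetP/(_ v vSj).
Qed.

Lemma ordered_partition_tail v :
  v \in W :\: nth set0 S 0 -> exists2 j, 0 < j < size S & v \in nth set0 S j.
Proof.
case: partS => _ _ _ memW; rewrite inE memW => /andP[vS1 /existsP[j vSj]].
exists j => //; rewrite ltn_ord andbT lt0n.
by apply: contraNneq vS1 => j0; rewrite -j0.
Qed.

End OrderedPartition.

Theorem lemma11 (Hs : seq digraph) (V : finType) (E : rel V) (k : nat)
    (W : {set V}) (S : seq {set V}) (Q X : {set V}) :
  (forall H, List.In H Hs -> rooted H) ->
  deletion_set E Hs W -> #|W| <= k.+1 ->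
  ordered_partition W S ->
  let S1 := nth set0 S 0 in
  S1 \subset Q -> Q \subset ~: (W :\: S1) ->
  (forall H, List.In H Hs -> ~ contains_in E Q H) ->
  min_separator E S1 (W :\: S1) (out_nbhd E Q) ->
  solution E Hs S W k X ->
  R_D E S1 X :&: out_nbhd E Q = set0 ->
  exists X', solution E Hs S W k X' /\ out_nbhd E Q \subset X'.
Proof.
move=> _ _ _ partS S1 S1Q QW noH minC [Xk XW Xdel Xhit] RC.
set C := out_nbhd E Q; set P := R_D E S1 C.
have PQ : P \subset Q by apply: R_D_min S1Q (@out_nbhd_closed _ _ Q).
have clP : out_closed E C P by apply: R_D_closed.
have S1W := ordered_partition_head_subset partS.
have W_split : W \subset S1 :|: W :\: S1.
  by apply/subsetP => v; rewrite !inE; case: (v \in S1).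
have hitS1 : hits_all_paths E S1 (W :\: S1) X.
  move=> a b p aS1 /(ordered_partition_tail partS)[j jS bSj].
  exact: (Xhit 0 j jS a b p aS1 bSj).
exists ((X :\: P) :|: C); split; last exact: subsetUr.
split.
- apply: leq_trans Xk; apply: card_exchange_R_D minC _ hitS1 RC.
  by apply: disjointWr XW; rewrite subUset S1W subsetDl.
- rewrite -setI_eq0 setIUl setU_eq0 !setI_eq0 (disjointWl (subsetDl X P) XW) /=.
  by apply: disjointWr W_split _; case: minC => [[]].
- apply: deletion_set_exchange clP _ Xdel => H HH /(contains_in_subset PQ).
  exact: noH.
- move=> i j ij; apply: hits_all_paths_exchange clP _ (Xhit i j ij).
  have jS : 0 < j < size S by case/andP: ij => /(leq_ltn_trans (leq0n i)) ->.
  apply: disjointW (ordered_partition_tail_subset partS jS) PQ _.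
  by rewrite disjoint_sym disjoints_subset.
Qed.
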